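(* Let $m$ be an even positive integer, let $q,k$ be positive integers, and put $n=q(k-1)+1$. Let ${\bf h}=(h_0,h_1,\dots,h_{qm(k-1)})^\top\in\mathbb{R}^{qm(k-1)+1}$ (note $qm(k-1)+1=m(n-1)+1$). Let $\mathcal{H}_m$ be the $m^{\rm th}$-order $n$-dimensional Hankel tensor with entries $(\mathcal{H}_m)_{i_1\dots i_m}=h_{i_1+\dots+i_m}$ ($0\le i_j\le n-1$), and let $\mathcal{H}_{qm}$ be the $(qm)^{\rm th}$-order $k$-dimensional Hankel tensor with entries $(\mathcal{H}_{qm})_{i_1\dots i_{qm}}=h_{i_1+\dots+i_{qm}}$ ($0\le i_j\le k-1$). Then: (i) if $\mathcal{H}_m$ is positive semi-definite (resp. positive definite, negative semi-definite, negative definite), then $\mathcal{H}_{qm}$ is positive semi-definite (resp. positive definite, negative semi-definite, negative definite); (ii) if $\mathcal{H}_m$ is an SOS tensor, then $\mathcal{H}_{qm}$ is an SOS tensor, and the SOS rank of $\mathcal{H}_{qm}$ is no larger than the SOS rank of $\mathcal{H}_m$.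
   Context: For a real $m^{\rm th}$-order $n$-dimensional tensor $\mathcal{T}$ with $m$ even, $\mathcal{T}{\bf x}^m=\sum_{i_1,\dots,i_m}\mathcal{T}_{i_1\dots i_m}x_{i_1}\cdots x_{i_m}$. $\mathcal{T}$ is positive semi-definite (positive definite, negative semi-definite, negative definite) if $\mathcal{T}{\bf x}^m\ge 0$ ($>0$, $\le 0$, $<0$) for all nonzero ${\bf x}\in\mathbb{R}^n$. $\mathcal{T}$ is an SOS tensor if the polynomial $\mathcal{T}{\bf x}^m$ is a sum of squares of real polynomials; its SOS rank is the minimum number of squares in such a representation. *)

From HB Require Import structures.
From mathcomp Require Import all_boot all_order all_algebra.
From mathcomp Require Import mpoly.
Set Implicit Arguments. Unset Strict Implicit. Unset Printing Implicit Defensive.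
Import Order.TTheory GRing.Theory Num.Theory.
Local Open Scope ring_scope.

Definition tensor (R : Type) (m n : nat) := {ffun m.-tuple 'I_n -> R}.

Section Tensors.
Variables (R : realFieldType) (m n : nat).

Definition tapply (T : tensor R m n) (x : 'rV[R]_n) : R :=
  \sum_(t : m.-tuple 'I_n) T t * \prod_(j < m) x 0 (tnth t j).

Definition tpoly (T : tensor R m n) : {mpoly R[n]} :=
  \sum_(t : m.-tuple 'I_n) T t *: \prod_(j < m) 'X_(tnth t j).

Definition psd_tensor (T : tensor R m n) : Prop := forall x, 0 <= tapply T x.
Definition pd_tensor (T : tensor R m n) : Prop := forall x, x != 0 -> 0 < tapply T x.
Definition nsd_tensor (T : tensor R m n) : Prop := forall x, tapply T x <= 0.
Definition nd_tensor (T : tensor R m n) : Prop := forall x, x != 0 -> tapply T x < 0.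

Definition sos_with (T : tensor R m n) (r : nat) : Prop :=
  exists s : seq {mpoly R[n]}, size s = r /\ tpoly T = \sum_(p <- s) p ^+ 2.

Definition sos_tensor (T : tensor R m n) : Prop := exists r, sos_with T r.

Definition is_sos_rank (T : tensor R m n) (r : nat) : Prop :=
  sos_with T r /\ forall r', sos_with T r' -> (r <= r')%N.

Definition hankel (h : nat -> R) : tensor R m n :=
  [ffun t : m.-tuple 'I_n => h (\sum_(j < m) (tnth t j : nat))%N].

End Tensors.

(** With [P_y(t) = y_0 + y_1 t + ... + y_(k-1) t^(k-1)], the Hankel form
    [H y^m] equals [L_h(P_y^m)] for the moment functional
    [L_h(sum_s c_s t^s) = sum_s h_s c_s].  Hence
    [H_qm y^(qm) = L_h((P_y^q)^m) = H_m x^m], where [x] is the coefficient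
    vector of [P_y^q], of length [q(k-1)+1 = n].  The map [y |-> x] is
    polynomial and, [R[t]] being a domain, sends nonzero vectors to nonzero
    vectors: definiteness transfers from [H_m] to [H_qm], and substituting it
    into an SOS decomposition of [H_m x^m] yields one of [H_qm y^(qm)] with
    the same number of squares. *)

From mathcomp Require Import all_boot all_order all_algebra.
From mathcomp Require Import mpoly.
Set Implicit Arguments. Unset Strict Implicit. Unset Printing Implicit Defensive.
Import Order.TTheory GRing.Theory Num.Theory.
Local Open Scope ring_scope.

Section HankelMoments.
Variable S : comNzRingType.
Implicit Types (h : nat -> S) (p : {poly S}).

Definition genpoly n (x : 'I_n -> S) : {poly S} := \sum_(i < n) x i *: 'X^i.

Definition hankel_moment h p := \sum_(s < size p) h s * p`_s.

Lemma coef_genpoly n (x : 'I_n -> S) (i : 'I_n) : (genpoly x)`_i = x i.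
Proof.
rewrite /genpoly coef_sum (bigD1 i) //= coefZ coefXn eqxx mulr1 big1 ?addr0 //.
move=> j ji; rewrite coefZ coefXn.
by case: eqP => [/val_inj ij|]; [rewrite ij eqxx in ji | rewrite mulr0].
Qed.

Lemma size_genpoly n (x : 'I_n -> S) : (size (genpoly x) <= n)%N.
Proof.
apply: (big_ind (fun p => size p <= n)%N) => [|p1 p2 s1 s2|i _].
- by rewrite size_poly0.
- by apply: leq_trans (size_polyD _ _) _; rewrite geq_max s1 s2.
- by apply: leq_trans (size_scale_leq _ _) _; rewrite size_polyXn.
Qed.

Lemma genpoly_coefK n p : (size p <= n)%N ->
  genpoly (fun i : 'I_n => p`_i) = p.
Proof. by move=> pn; rewrite /genpoly -poly_def; apply: take_poly_id. Qed.

Lemma size_genpoly_exp k q (y : 'I_k -> S) :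
  (size (genpoly y ^+ q) <= (q * (k - 1)).+1)%N.
Proof.
apply: leq_trans (size_poly_exp_leq _ _) _.
by rewrite ltnS mulnC leq_mul2l -subn1 leq_sub2r ?size_genpoly ?orbT.
Qed.

Lemma hankel_momentE h p N : (size p <= N)%N ->
  hankel_moment h p = \sum_(s < N) h s * p`_s.
Proof.
move=> pN; rewrite /hankel_moment (big_ord_widen N (fun s => h s * p`_s)) //.
rewrite big_mkcond; apply: eq_bigr => s _.
by case: ltnP => // ps; rewrite nth_default ?mulr0.
Qed.

Lemma hankel_moment_sum_monomials h (I : finType) (c : I -> S) (d : I -> nat) :
  hankel_moment h (\sum_i c i *: 'X^(d i)) = \sum_i h (d i) * c i.
Proof.
set p := \sum_i _; set N := (size p + \sum_i d i).+1.
have dN i : (d i < N)%N.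
  by rewrite ltnS (leq_trans _ (leq_addl _ _)) // (bigD1 i) //= leq_addr.
have pN : (size p <= N)%N by rewrite /N ltnW // ltnS leq_addr.
rewrite (hankel_momentE h pN).
under eq_bigr do rewrite coef_sum mulr_sumr.
rewrite exchange_big /=; apply: eq_bigr => i _.
rewrite (bigD1 (Ordinal (dN i))) //= coefZ coefXn eqxx mulr1 big1 ?addr0 //.
move=> s si; rewrite coefZ coefXn.
by case: eqP => [e|]; [rewrite -(inj_eq val_inj) /= e eqxx in si | rewrite !mulr0].
Qed.

Lemma exp_genpoly n m (x : 'I_n -> S) :
  genpoly x ^+ m = \sum_(t : m.-tuple 'I_n)
    (\prod_(j < m) x (tnth t j)) *: 'X^(\sum_(j < m) (tnth t j : nat)).
Proof.
rewrite -[m in LHS]card_ord -prodr_const bigA_distr_bigA /=.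
rewrite (reindex (fun t : m.-tuple 'I_n => [ffun j => tnth t j])) /=; last first.
  exists (fun f : {ffun 'I_m -> 'I_n} => [tuple f j | j < m]) => [t _|f _].
    by apply: eq_from_tnth => j; rewrite tnth_mktuple ffunE.
  by apply/ffunP => j; rewrite !ffunE tnth_mktuple.
apply: eq_bigr => t _; under eq_bigr do rewrite ffunE -mul_polyC.
by rewrite big_split /= -rmorph_prod prodrXr mul_polyC.
Qed.

Lemma hankel_form_moment h n m (x : 'I_n -> S) :
  \sum_(t : m.-tuple 'I_n)
     h (\sum_(j < m) (tnth t j : nat))%N * \prod_(j < m) x (tnth t j)
  = hankel_moment h (genpoly x ^+ m).
Proof. by rewrite exp_genpoly hankel_moment_sum_monomials. Qed.

Lemma hankel_form_genpoly_exp h q m k n (y : 'I_k -> S) :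
  (q * (k - 1) < n)%N ->
  \sum_(t : (q * m).-tuple 'I_k)
     h (\sum_(j < q * m) (tnth t j : nat))%N * \prod_(j < q * m) y (tnth t j)
  = \sum_(t : m.-tuple 'I_n)
     h (\sum_(j < m) (tnth t j : nat))%N
       * \prod_(j < m) (genpoly y ^+ q)`_(tnth t j).
Proof.
move=> qkn; rewrite hankel_form_moment.
rewrite (hankel_form_moment h m (fun i : 'I_n => (genpoly y ^+ q)`_i)).
by rewrite exprM genpoly_coefK // (leq_trans (size_genpoly_exp q y)).
Qed.

End HankelMoments.

Lemma sos_with_comp_mpoly (R : realFieldType) m n m' n'
    (T : tensor R m n) (T' : tensor R m' n') (lt : n.-tuple {mpoly R[n']}) r :
  tpoly T' = comp_mpoly lt (tpoly T) -> sos_with T r -> sos_with T' r.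
Proof.
move=> eT [s [sz eS]]; exists (map (comp_mpoly lt) s); split.
  by rewrite size_map.
by rewrite eT eS rmorph_sum big_map; apply: eq_bigr => p _; rewrite rmorphXn.
Qed.

Section HankelPowers.
Variables (R : realFieldType) (h : nat -> R) (m q k n : nat).
Hypothesis qkn : (q * (k - 1) < n)%N.

Definition pow_coefs (y : 'rV[R]_k) : 'rV[R]_n :=
  \row_(i < n) (genpoly (y 0) ^+ q)`_i.

Definition pow_coef_mpolys : n.-tuple {mpoly R[k]} :=
  [tuple (genpoly (fun j : 'I_k => 'X_j) ^+ q)`_i | i < n].

Lemma tapply_hankel_pow_coefs y :
  tapply (hankel (q * m) k h) y = tapply (hankel m n h) (pow_coefs y).
Proof.
rewrite /tapply; under eq_bigr do rewrite ffunE.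
under [RHS]eq_bigr do rewrite ffunE.
rewrite (hankel_form_genpoly_exp h m (y 0) qkn).
by apply: eq_bigr => t _; congr (_ * _); apply: eq_bigr => j _; rewrite mxE.
Qed.

Lemma pow_coefs_neq0 y : (0 < q)%N -> y != 0 -> pow_coefs y != 0.
Proof.
move=> q0; apply: contra_neq => /rowP y0.
have : genpoly (y 0) ^+ q = 0.
  rewrite -(genpoly_coefK (leq_trans (size_genpoly_exp q (y 0)) qkn)).
  by apply: big1 => i _; have := y0 i; rewrite !mxE => ->; rewrite scale0r.
move/eqP; rewrite expf_eq0 q0 => /eqP P0.
by apply/rowP => j; rewrite mxE -coef_genpoly P0 coef0.
Qed.

Lemma tpoly_hankel_pow :
  tpoly (hankel (q * m) k h) = comp_mpoly pow_coef_mpolys (tpoly (hankel m n h)).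
Proof.
rewrite /tpoly raddf_sum /=.
under eq_bigr do rewrite ffunE -mul_mpolyC.
rewrite (hankel_form_genpoly_exp (fun s => (h s)%:MP) m (fun j => 'X_j) qkn).
apply: eq_bigr => t _; rewrite ffunE comp_mpolyZ rmorph_prod /= -mul_mpolyC.
congr (_ * _); apply: eq_bigr => j _.
by rewrite comp_mpolyXU -tnth_nth tnth_mktuple.
Qed.

End HankelPowers.

Theorem theorem1 (R : realFieldType) (m q k : nat) (h : nat -> R) :
  (0 < m)%N -> ~~ odd m -> (0 < q)%N -> (0 < k)%N ->
  let n := (q * (k - 1)).+1 in
  let Hm := hankel m n h in
  let Hqm := hankel (q * m) k h in
  ((psd_tensor Hm -> psd_tensor Hqm) /\
   (pd_tensor Hm -> pd_tensor Hqm) /\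
   (nsd_tensor Hm -> nsd_tensor Hqm) /\
   (nd_tensor Hm -> nd_tensor Hqm)) /\
  (sos_tensor Hm ->
     sos_tensor Hqm /\
     forall r1 r2, is_sos_rank Hm r1 -> is_sos_rank Hqm r2 -> (r2 <= r1)%N).
Proof.
move=> _ _ q0 _ n Hm Hqm.
have qkn : (q * (k - 1) < n)%N by [].
have Hform := tapply_hankel_pow_coefs h m qkn.
have Hnz y : y != 0 -> pow_coefs q n y != 0 := pow_coefs_neq0 qkn q0.
have Hsos r : sos_with Hm r -> sos_with Hqm r.
  exact: sos_with_comp_mpoly (tpoly_hankel_pow h m qkn).
split.
  split; first by move=> H y; rewrite Hform.
  split; first by move=> H y /Hnz; rewrite Hform; apply: H.
  split; first by move=> H y; rewrite Hform.
  by move=> H y /Hnz; rewrite Hform; apply: H.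
move=> [r Hr]; split; first by exists r; apply: Hsos.
by move=> r1 r2 [Hr1 _] [_ min_r2]; exact: min_r2 (Hsos _ Hr1).
Qed.
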